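(* For every $t=0,1,\dots,T-1$, $S^*_t\le S^U_t$.
   Context: Model. Fix an integer horizon $T\ge 2$, a discount factor $\alpha\in(0,1]$, and for $t=0,\dots,T-1$: unit ordering costs $c_t\in\mathbb R$, a salvage coefficient $c_T\in\mathbb R$, setup costs $K_t\ge 0$, functions $G_t:\mathbb R\to\mathbb R$, and independent nonnegative random demands $D_0,\dots,D_{T-1}$ with right-continuous distribution functions $F_t$ and finite means; all expectations appearing are assumed finite. Let $\delta(z)=1$ for $z>0$, $\delta(0)=0$. Put $C_t(y)=(c_t-\alpha c_{t+1})y+G_t(y)+\alpha c_{t+1}E[D_t]$. Standing assumptions: (i) each $C_t$ is convex with $C_t(y)\to+\infty$ as $|y|\to\infty$; (ii) $K_t\ge \alpha K_{t+1}$ for $t=0,\dots,T-2$. Let $V^*_T\equiv 0$, and for $t=T-1,\dots,0$: $H^*_t(y)=C_t(y)+\alpha E[V^*_{t+1}(y-D_t)]$, $V^*_t(x)=\min_{y\ge x}\{K_t\delta(y-x)+H^*_t(y)\}$, and $S^*_t=\min\{x: H^*_t(x)=\min_{y\in\mathbb R}H^*_t(y)\}$. Fix $\theta>0$, $z_m=m\theta$, $Z_\theta=\{z_m:m\in\mathbb Z\}$. Let $C^m_t=\min\{y: C_t(y)=\min_x C_t(x)\}$; with $n_0$ the integer such that $z_{n_0}<C^m_t\le z_{n_0+1}$, let $S^U_t=\min\{z_m\in Z_\theta: z_m\ge C^m_t,\ C_t(z_m)>C_t(z_{n_0})+K_t\}$. *)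

From HB Require Import structures.
From mathcomp Require Import all_boot all_order all_algebra.
From mathcomp Require Import all_classical all_reals all_analysis.
Set Implicit Arguments. Unset Strict Implicit. Unset Printing Implicit Defensive.
Import Order.TTheory GRing.Theory Num.Theory.
Import numFieldNormedType.Exports.
Local Open Scope classical_set_scope.
Local Open Scope ring_scope.

Section InventoryModel.
Context {R : realType} {d : measure_display} {Omega : measurableType d}.
Variable (P : probability Omega R).

(* Expectation of a real random quantity (meaningful when integrable). *)
Definition Exp (X : Omega -> R) : R := fine (\int[P]_w (X w)%:E).

Definition demands_independent (T : nat) (D : nat -> {RV P >-> R}) : Prop :=
  forall s : seq nat, uniq s -> (forall i, i \in s -> (i < T)%N) ->
  forall B : nat -> set R, (forall i, measurable (B i)) ->
  P (\bigcap_(i in [set` s]) (D i @^-1` B i)) =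
  (\prod_(i <- s) P (D i @^-1` B i))%E.

Variables (T : nat) (alpha : R) (c K : nat -> R) (G : nat -> R -> R)
  (D : nat -> {RV P >-> R}).

Definition delta (z : R) : R := if 0 < z then 1 else 0.

Definition Cfun (t : nat) (y : R) : R :=
  (c t - alpha * c t.+1) * y + G t y + alpha * c t.+1 * Exp (D t).

(* Backward recursion indexed by the number k of remaining periods,
   i.e. Vrem k = V*_{T-k}; Vrem 0 = V*_T = 0.  The "min" is rendered by inf. *)
Fixpoint Vrem (k : nat) : R -> R :=
  match k with
  | 0 => fun _ => 0
  | k'.+1 => fun x =>
      let t := (T - k'.+1)%N in
      inf [set K t * delta (y - x) +
               (Cfun t y + alpha * Exp (fun w => Vrem k' (y - D t w)))
          | y in [set y | x <= y]]
  end.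

Definition Vstar (t : nat) : R -> R := Vrem (T - t).

Definition Hstar (t : nat) (y : R) : R :=
  Cfun t y + alpha * Exp (fun w => Vstar t.+1 (y - D t w)).

Definition Sstar (t : nat) : R :=
  inf [set x | Hstar t x = inf (range (Hstar t))].

Definition Cm (t : nat) : R :=
  inf [set y | Cfun t y = inf (range (Cfun t))].

Definition zgrid (theta : R) (m : int) : R := m%:~R * theta.

Definition SU (theta : R) (t : nat) : R :=
  inf [set zgrid theta m | m in
        [set m : int | Cm t <= zgrid theta m /\
           exists n0 : int,
             zgrid theta n0 < Cm t <= zgrid theta (n0 + 1) /\
             Cfun t (zgrid theta n0) + K t < Cfun t (zgrid theta m)]].

End InventoryModel.

Definition convex_fun {R : realType} (f : R -> R) : Prop :=
  forall x y l : R, 0 <= l <= 1 ->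
    f (l * x + (1 - l) * y) <= l * f x + (1 - l) * f y.

Definition coercive {R : realType} (f : R -> R) : Prop :=
  forall M : R, exists N : R, forall y : R, N <= `|y| -> M <= f y.

(* Write H*_t = C_t + alpha W_t with W_t(y) = E[V*_{t+1}(y - D_t)].  Ordering up to
   y from a lower level x costs at most K_{t+1} more than from x' >= x, so
   V*_{t+1}(x) <= K_{t+1} + V*_{t+1}(x') and hence alpha W_t(z0) <= K_t + alpha W_t(s)
   for z0 <= s.  If s minimises H*_t this gives C_t(s) <= C_t(z0) + K_t, and by
   convexity of C_t no point z > z0 with C_t(z) > C_t(z0) + K_t lies left of s.
   Since inf of an empty set is 0, S*_t is only meaningful once the minimum of
   H*_t is attained; coercivity and uniform continuity of H*_t on segments are
   propagated backwards in t: a convex coercive C_t is locally Lipschitz, the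
   setup-cost operator preserves uniform continuity and is constant far to the
   left, and averaging over nonnegative demands keeps uniform continuity on left
   rays. *)

From HB Require Import structures.
From mathcomp Require Import all_boot all_order all_algebra.
From mathcomp Require Import all_classical all_reals all_analysis.
From mathcomp Require Import ring lra zify.
Set Implicit Arguments. Unset Strict Implicit. Unset Printing Implicit Defensive.
Import Order.TTheory GRing.Theory Num.Theory.
Import numFieldNormedType.Exports.
Local Open Scope classical_set_scope.
Local Open Scope ring_scope.

Section RealFunctions.
Context {R : realType}.
Implicit Types (f : R -> R) (E : set R).

Lemma inf_minimum E x : lbound E x -> E x -> inf E = x.
Proof.
move=> Ex_lb Ex; apply/eqP; rewrite eq_le lb_le_inf ?andbT //; last by exists x.
by apply: (ge_inf _ Ex); exists x.
Qed.

Definition unif_cont_segments f := forall a b e, 0 < e -> exists2 dl, 0 < dl &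
  forall x y, a <= x <= b -> a <= y <= b -> `|x - y| < dl -> `|f x - f y| < e.

Definition unif_cont_left_rays f := forall b e, 0 < e -> exists2 dl, 0 < dl &
  forall x y, x <= b -> y <= b -> `|x - y| < dl -> `|f x - f y| < e.

Lemma unif_cont_left_rays_of_const f a k : unif_cont_segments f ->
  (forall x, x <= a -> f x = k) -> unif_cont_left_rays f.
Proof.
move=> uf fk b e e0; have [dl dl0 hdl] := uf (a - 1) (Num.max a b) e e0.
exists (Num.min dl 1); first by rewrite lt_min dl0 ltr01.
move=> x y xb yb; rewrite lt_min => /andP[xy_dl]; rewrite ltr_norml => /andP[h1 h2].
have [xa|xa] := leP x a; have [ya|ya] := leP y a.
- by rewrite (fk x xa) (fk y ya) subrr normr0.
all: by apply: hdl => //; rewrite le_max ?xb ?yb orbT andbT; lra.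
Qed.

Lemma unif_cont_segments_continuous f : unif_cont_segments f -> continuous f.
Proof.
move=> uf x; apply/cvgrPdist_lt => e e0.
have [dl dl0 hdl] := uf (x - 1) (x + 1) e e0.
apply/nbhs_ballP; exists (Num.min dl 1); first by rewrite /= lt_min dl0 ltr01.
move=> y; rewrite /ball /= lt_min => /andP[xy_dl]; rewrite ltr_norml => /andP[h1 h2].
by apply: hdl => //; apply/andP; split; lra.
Qed.

Lemma unif_cont_segments_add_scale f g (k : R) : 0 <= k ->
  unif_cont_segments f -> unif_cont_segments g ->
  unif_cont_segments (fun y => f y + k * g y).
Proof.
move=> k0 uf ug a b e e0.
have [df df0 hdf] := uf a b (e / 2) ltac:(lra).
have [dg dg0 hdg] := ug a b (e / 2 / (k + 1)) ltac:(by apply: divr_gt0; lra).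
exists (Num.min df dg) => [|x y hx hy]; first by rewrite lt_min df0 dg0.
rewrite lt_min => /andP[/(hdf x y hx hy) fxy /(hdg x y hx hy)].
rewrite ltr_pdivlMr ?ltr_wpDl // => gxy.
have -> : f x + k * g x - (f y + k * g y) = (f x - f y) + k * (g x - g y) by ring.
apply: le_lt_trans (ler_normD _ _) _; rewrite normrM ger0_norm //.
by have := normr_ge0 (g x - g y); nra.
Qed.

Lemma coercive_sublevel_lbound f v : coercive f ->
  exists L, lbound [set x | f x <= v] L.
Proof.
move=> co; have [N HN] := co (v + 1); exists (- `|N|) => x /= fxv.
have [Nx|xN] := leP N `|x|; first by have := HN x Nx; lra.
have : - x <= `|x| by rewrite -normrN ler_norm.
have := ler_norm N; lra.
Qed.

Lemma coercive_continuous_has_min f : continuous f -> coercive f ->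
  exists s, forall y, f s <= f y.
Proof.
move=> cf co; have [N HN] := co (f 0 + 1).
have hN : - `|N| <= `|N| by have := normr_ge0 N; lra.
have [s _ smin] := EVT_min hN (continuous_subspaceT cf).
have f0 : f s <= f 0 by apply: smin; rewrite in_itv /= oppr_le0 normr_ge0.
exists s => y; have [Ny|yN] := leP N `|y|; first by have := HN y Ny; lra.
by apply: smin; rewrite in_itv /= -ler_norml; apply: ltW (lt_le_trans yN (ler_norm _)).
Qed.

Lemma delta_gt0 (z : R) : 0 < z -> delta z = 1.
Proof. by rewrite /delta => ->. Qed.

Lemma delta0 : delta (0 : R) = 0.
Proof. by rewrite /delta ltxx. Qed.

Lemma delta_ge0_le1 (z : R) : 0 <= delta z <= 1.
Proof. by rewrite /delta; case: ifP; rewrite lexx ?ler01. Qed.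

Lemma le_delta (z z' : R) : z <= z' -> delta z <= delta z'.
Proof.
rewrite /delta => zz'; case: ifP => [z0|_]; last by case: ifP; rewrite ?ler01.
by rewrite (lt_le_trans z0 zz').
Qed.

End RealFunctions.

Section SetupValue.
Context {R : realType}.
Variables (H : R -> R) (K Lh : R).
Hypotheses (K_ge0 : 0 <= K) (H_lb : forall y, Lh <= H y).

Definition setup_value (x : R) : R :=
  inf [set K * delta (y - x) + H y | y in [set y | x <= y]].

Let offers_lb x : lbound [set K * delta (y - x) + H y | y in [set y | x <= y]] Lh.
Proof.
move=> _ [y _ <-]; have /andP[d0 _] := delta_ge0_le1 (y - x).
by have := H_lb y; have := mulr_ge0 K_ge0 d0; lra.
Qed.

Lemma setup_value_lb x : Lh <= setup_value x.
Proof. by apply: lb_le_inf (@offers_lb x); exists (K * delta (x - x) + H x), x => /=. Qed.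

Lemma setup_value_le x y : x <= y -> setup_value x <= K * delta (y - x) + H y.
Proof. by move=> xy; apply: (ge_inf _); [exists Lh; exact: (@offers_lb x) | exists y]. Qed.

Lemma setup_value_ge x v : (forall y, x <= y -> v <= K * delta (y - x) + H y) ->
  v <= setup_value x.
Proof.
move=> hv; apply: lb_le_inf; first by exists (K * delta (x - x) + H x), x => /=.
by move=> _ [y /= xy <-]; exact: hv.
Qed.

Lemma setup_value_le_self x : setup_value x <= H x.
Proof. by have := setup_value_le (lexx x); rewrite subrr delta0 mulr0 add0r. Qed.

Lemma setup_value_le_addK x x' : x <= x' -> setup_value x <= K + setup_value x'.
Proof.
move=> xx'; rewrite addrC -lerBlDr; apply: setup_value_ge => y x'y.
rewrite lerBlDr; apply: le_trans (setup_value_le (le_trans xx' x'y)) _.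
have /andP[_ d1] := delta_ge0_le1 (y - x); have /andP[e0 _] := delta_ge0_le1 (y - x').
by have := mulr_ge0 K_ge0 e0; have := ler_wpM2l K_ge0 d1; lra.
Qed.

(* Ordering up to y > x costs K, so far to the left of a minimiser s of H
   the best action is to order up to s. *)
Lemma setup_value_left_const s : (forall y, H s <= H y) -> coercive H ->
  exists a, forall x, x <= a -> setup_value x = K + H s.
Proof.
move=> smin co; have [N HN] := co (K + H s + 1).
exists (Num.min (- `|N|) s - 1) => x; rewrite lerBrDr le_min => /andP[xN xs].
have {}xs : x < s by lra.
apply/eqP; rewrite eq_le; apply/andP; split.
  by have := setup_value_le (ltW xs); rewrite delta_gt0 ?subr_gt0 // mulr1.
apply: setup_value_ge => y; rewrite le_eqVlt => /orP[/eqP <-|xy].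
  have Nx : N <= `|x| by rewrite ler0_norm; have := ler_norm N; have := normr_ge0 N; lra.
  by rewrite subrr delta0 mulr0 add0r; have := HN x Nx; lra.
by rewrite delta_gt0 ?subr_gt0 // mulr1 lerD2l.
Qed.

Lemma setup_value_dist x x' e : x <= x' ->
  (forall z, x <= z <= x' -> `|H z - H x'| <= e) ->
  `|setup_value x - setup_value x'| <= e.
Proof.
move=> xx' Hclose; have := Hclose x; rewrite lexx xx' => /(_ isT).
rewrite ler_norml => /andP[Hx1 Hx2].
have right_bound : setup_value x - e <= setup_value x'.
  apply: setup_value_ge => y; rewrite le_eqVlt => /orP[/eqP <-|x'y].
    by rewrite subrr delta0 mulr0 add0r; have := setup_value_le_self x; lra.
  have := setup_value_le (ltW (le_lt_trans xx' x'y)).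
  by rewrite !delta_gt0 ?subr_gt0 ?(le_lt_trans xx' x'y) // mulr1; lra.
have left_bound : setup_value x' - e <= setup_value x.
  apply: setup_value_ge => y xy; have [x'y|yx'] := leP x' y.
    have := setup_value_le x'y; have := ler_wpM2l K_ge0 (le_delta (lerB (lexx y) xx')).
    lra.
  have := Hclose y; rewrite xy (ltW yx') => /(_ isT); rewrite ler_norml => /andP[h _].
  have /andP[d0 _] := delta_ge0_le1 (y - x).
  by have := setup_value_le_self x'; have := mulr_ge0 K_ge0 d0; lra.
by rewrite ler_norml; apply/andP; split; lra.
Qed.

Lemma setup_value_unif_cont : unif_cont_segments H -> unif_cont_segments setup_value.
Proof.
move=> uH a b e e0; have [dl dl0 hdl] := uH a b (e / 2) ltac:(lra).
exists dl => // x y.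
wlog xy : x y / x <= y.
  move=> hwlog hx hy xy_dl; have [xy|/ltW yx] := leP x y; first exact: hwlog.
  by rewrite distrC; apply: hwlog; rewrite // distrC.
move=> /andP[ax xb] /andP[ay yb] xy_dl.
suff : `|setup_value x - setup_value y| <= e / 2 by lra.
apply: setup_value_dist => // z /andP[xz zy]; apply: ltW; apply: hdl.
- by rewrite (le_trans ax xz) (le_trans zy yb).
- by rewrite ay yb.
- by apply: le_lt_trans xy_dl; rewrite !ler0_norm ?subr_le0 //; lra.
Qed.

End SetupValue.

Section Convex.
Context {R : realType}.
Variable f : R -> R.
Hypothesis f_convex : convex_fun f.

Lemma convex_slope_le x y z : x < y -> y < z ->
  (f y - f x) * (z - y) <= (f z - f y) * (y - x).
Proof.
move=> xy yz; have zx : 0 < z - x by lra.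
set l := (z - y) / (z - x).
have l01 : 0 <= l <= 1 by rewrite divr_ge0 ?ler_pdivrMr ?mul1r; lra.
have := f_convex x z l01.
have -> : l * x + (1 - l) * z = y by rewrite /l; field; lra.
move=> /(ler_wpM2l (ltW zx)).
have -> : (z - x) * (l * f x + (1 - l) * f z) = (z - y) * f x + (y - x) * f z.
  by rewrite /l; field; lra.
nra.
Qed.

Lemma convex_le_max x y z : x <= y <= z -> f y <= Num.max (f x) (f z).
Proof.
move=> /andP[]; rewrite le_eqVlt => /orP[/eqP <-|xy]; first by rewrite le_max lexx.
rewrite le_eqVlt => /orP[/eqP <-|yz]; first by rewrite le_max lexx orbT.
have := convex_slope_le xy yz; rewrite le_max.
by case: leP => //= fxy; case: leP => //= fzy; nra.
Qed.

Lemma convex_rise x y z : x < y -> y < z -> f x < f y -> f y < f z.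
Proof. by move=> xy yz fxy; have := convex_slope_le xy yz; nra. Qed.

Lemma convex_coercive_lb : coercive f -> exists L, forall y, L <= f y.
Proof.
move=> co; have [N HN] := co 0; set n := `|N|.
exists (Num.min 0 (2 * f 0 - Num.max (f (- n)) (f n))) => y.
have [Ny|yN] := leP N `|y|; first by rewrite ge_min HN.
rewrite ge_min; apply/orP; right.
(* midpoint convexity at 0: f y >= 2 f 0 - f (- y), and f (- y) is bounded on [- n, n] *)
have : f (- y) <= Num.max (f (- n)) (f n).
  apply: convex_le_max; rewrite -ler_norml normrN; apply: ltW.
  exact: lt_le_trans yN (ler_norm _).
have half : 0 <= (1 / 2 : R) <= 1 by apply/andP; split; lra.
have := f_convex y (- y) half.
have -> : 1 / 2 * y + (1 - 1 / 2) * - y = 0 by field.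
lra.
Qed.

Lemma convex_lipschitz_segment Lc a b : (forall y, Lc <= f y) ->
  exists M, forall x y, a <= x <= b -> a <= y <= b -> `|f x - f y| <= M * `|x - y|.
Proof.
move=> f_lb; set M1 := f (b + 1) - Lc; set M2 := f (a - 1) - Lc.
have M1_ge0 : 0 <= M1 by have := f_lb (b + 1); rewrite /M1; lra.
have M2_ge0 : 0 <= M2 by have := f_lb (a - 1); rewrite /M2; lra.
suff ordered x y : a <= x -> y <= b -> x < y -> `|f x - f y| <= (M1 + M2) * (y - x).
  exists (M1 + M2) => x y /andP[ax xb] /andP[ay yb].
  have [xy|yx|<-] := ltgtP x y; last by rewrite !subrr normr0 mulr0.
    by rewrite [`|x - y|]distrC [`|y - x|]gtr0_norm ?subr_gt0 //; exact: ordered.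
  by rewrite distrC [`|x - y|]gtr0_norm ?subr_gt0 //; exact: ordered.
move=> ax yb xy; have yx0 : 0 < y - x by rewrite subr_gt0.
(* compare the slope on [x, y] with those on [y, b + 1] and [a - 1, x] *)
have up : f y - f x <= M1 * (y - x).
  have slope := @convex_slope_le x y (b + 1) xy ltac:(lra).
  have rhs : (f (b + 1) - f y) * (y - x) <= M1 * (y - x).
    by rewrite ler_pM2r // /M1; have := f_lb y; lra.
  have [fyx|fyx] := leP (f y - f x) 0; first by have := mulr_ge0 M1_ge0 (ltW yx0); lra.
  have : f y - f x <= (f y - f x) * (b + 1 - y) by rewrite ler_peMr ?(ltW fyx) //; lra.
  lra.
have down : f x - f y <= M2 * (y - x).
  have slope := @convex_slope_le (a - 1) x y ltac:(lra) xy.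
  have rhs : - M2 * (y - x) <= (f x - f (a - 1)) * (y - x).
    by rewrite ler_pM2r // /M2; have := f_lb x; lra.
  have [fxy|fxy] := leP (f x - f y) 0; first by have := mulr_ge0 M2_ge0 (ltW yx0); lra.
  have : f x - f y <= (f x - f y) * (x - (a - 1)) by rewrite ler_peMr ?(ltW fxy) //; lra.
  lra.
clearbody M1 M2; rewrite ler_norml; apply/andP; split.
  by have := mulr_ge0 M2_ge0 (ltW yx0); lra.
by have := mulr_ge0 M1_ge0 (ltW yx0); lra.
Qed.

Lemma convex_unif_cont : coercive f -> unif_cont_segments f.
Proof.
move=> co a b e e0; have [Lc f_lb] := convex_coercive_lb co.
have [M fM] := convex_lipschitz_segment a b f_lb.
exists (e / (`|M| + 1)) => [|x y hx hy xy]; first by apply: divr_gt0; rewrite ?ltr_wpDl.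
apply: le_lt_trans (fM x y hx hy) _.
rewrite ltr_pdivlMr ?ltr_wpDl // in xy.
have := ler_norm M; have := normr_ge0 (x - y); nra.
Qed.

End Convex.

Section Expectation.
Context {R : realType} {d : measure_display} {Omega : measurableType d}.
Variable P : probability Omega R.

Lemma Exp_cst (k : R) : Exp P (fun _ => k) = k.
Proof. by rewrite /Exp integral_cst //= probability_setT mule1. Qed.

Lemma Exp_le_add (f g : Omega -> R) (e : R) :
  P.-integrable setT (EFin \o f) -> P.-integrable setT (EFin \o g) ->
  (forall w, f w <= g w + e) -> Exp P f <= Exp P g + e.
Proof.
move=> If Ig fge.
have Ie := finite_measure_integrable_cst P e (@measurableT _ Omega).
have : (\int[P]_w (f w)%:E <= \int[P]_w ((g w)%:E + (cst e w)%:E))%E.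
  apply: le_integral => //; first exact: integrableD.
  by move=> w _; rewrite /= -EFinD lee_fin.
have int_e : (\int[P]_w (cst e w)%:E = e%:E)%E.
  rewrite (integral_cst P measurableT e%:E).
  by rewrite [X in (_ * X)%E](_ : _ = 1%E) ?mule1 //; exact: probability_setT.
rewrite integralD // int_e /Exp.
have := integrable_fin_num measurableT If; have := integrable_fin_num measurableT Ig.
by case: (\int[P]_w (f w)%:E)%E => [a| |]; case: (\int[P]_w (g w)%:E)%E => [b| |].
Qed.

Lemma Exp_ge_cst (f : Omega -> R) (L : R) :
  P.-integrable setT (EFin \o f) -> (forall w, L <= f w) -> L <= Exp P f.
Proof.
move=> If fL; rewrite -(Exp_cst L) -[Exp P f]addr0.
apply: Exp_le_add => // [|w]; last by rewrite addr0.
exact: finite_measure_integrable_cst.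
Qed.

Variables (Dt : Omega -> R) (V : R -> R).
Hypotheses (Dt_ge0 : forall w, 0 <= Dt w)
  (V_int : forall y, P.-integrable setT (fun w => (V (y - Dt w))%:E)).

Definition expected_next_value (y : R) : R := Exp P (fun w => V (y - Dt w)).

Lemma expected_next_value_lb L : (forall x, L <= V x) ->
  forall y, L <= expected_next_value y.
Proof. by move=> V_lb y; apply: Exp_ge_cst (V_int y) _ => w. Qed.

Lemma expected_next_value_le_add k : (forall x x', x <= x' -> V x <= k + V x') ->
  forall z y, z <= y -> expected_next_value z <= k + expected_next_value y.
Proof.
move=> V_le z y zy; rewrite addrC; apply: Exp_le_add (V_int z) (V_int y) _ => w.
by rewrite [_ + k]addrC; apply: V_le; rewrite lerD2r.
Qed.

(* Demands are nonnegative, so y - Dt w stays on the left ray (-oo, b] whenever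
   y <= b: uniform continuity there is uniform in w. *)
Lemma expected_next_value_unif_cont :
  unif_cont_left_rays V -> unif_cont_segments expected_next_value.
Proof.
move=> uV a b e e0; have [dl dl0 hdl] := uV b (e / 2) ltac:(lra).
have near u u' : u <= b -> u' <= b -> `|u - u'| < dl ->
    expected_next_value u <= expected_next_value u' + e / 2.
  move=> ub u'b uu'; apply: Exp_le_add (V_int u) (V_int u') _ => w.
  have Dw := Dt_ge0 w.
  have : `|V (u - Dt w) - V (u' - Dt w)| < e / 2.
    by apply: hdl; [lra | lra | rewrite opprB addrA subrK].
  by rewrite ltr_norml; lra.
exists dl => // y y' /andP[_ yb] /andP[_ y'b] yy'.
have := near y y' yb y'b yy'; have := near y' y y'b yb; rewrite distrC => /(_ yy').
by rewrite ltr_norml; lra.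
Qed.

End Expectation.

Section Regularity.
Context {R : realType} {d : measure_display} {Omega : measurableType d}.
Variable P : probability Omega R.

Definition cost_regular (H : R -> R) := coercive H /\ unif_cont_segments H.

Definition value_regular (k : R) (V : R -> R) :=
  [/\ exists L, forall x, L <= V x,
      forall x x', x <= x' -> V x <= k + V x' &
      unif_cont_left_rays V].

Lemma cost_regular_has_min H : cost_regular H -> exists s, forall y, H s <= H y.
Proof.
by case=> co uH; apply: coercive_continuous_has_min (unif_cont_segments_continuous uH) co.
Qed.

Lemma setup_value_regular H k : 0 <= k -> cost_regular H ->
  value_regular k (setup_value H k).
Proof.
move=> k0 Hreg; have [s smin] := cost_regular_has_min Hreg; case: Hreg => co uH.
have [a left_const] := setup_value_left_const k0 smin smin co.
split; first by exists (H s); exact: setup_value_lb.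
  exact: setup_value_le_addK.
exact: unif_cont_left_rays_of_const (setup_value_unif_cont k0 smin uH) left_const.
Qed.

Lemma cost_regular_step (C V : R -> R) (Dt : Omega -> R) alpha k :
  convex_fun C -> coercive C -> 0 <= alpha -> (forall w, 0 <= Dt w) ->
  (forall y, P.-integrable setT (fun w => (V (y - Dt w))%:E)) ->
  value_regular k V ->
  cost_regular (fun y => C y + alpha * expected_next_value P Dt V y).
Proof.
move=> C_cvx C_co a0 Dt0 V_int [[L V_lb] _ uV].
have W_lb := expected_next_value_lb V_int V_lb.
split.
  move=> M; have [N HN] := C_co (M - alpha * L); exists N => y Ny.
  by have := HN y Ny; have := ler_wpM2l a0 (W_lb y); lra.
apply: unif_cont_segments_add_scale a0 (convex_unif_cont C_cvx C_co) _.
exact: expected_next_value_unif_cont.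
Qed.

Lemma minimizer_le_of_cost_jump (C W : R -> R) alpha k kW s z0 z :
  convex_fun C -> 0 <= alpha -> alpha * kW <= k ->
  (forall x x', x <= x' -> W x <= kW + W x') ->
  (forall y, C s + alpha * W s <= C y + alpha * W y) ->
  z0 < z -> C z0 + k < C z -> s <= z.
Proof.
move=> C_cvx a0 akW W_le smin z0z jump; rewrite leNgt; apply/negP => zs.
have kW0 : 0 <= kW by have := W_le s s (lexx s); lra.
have k0 : 0 <= k by have := mulr_ge0 a0 kW0; lra.
have Cz_lt : C z < C s.
  by apply: (convex_rise C_cvx z0z zs); lra.
have := ler_wpM2l a0 (W_le z0 s (ltW (lt_trans z0z zs))).
by have := smin z0; rewrite mulrDr; lra.
Qed.

End Regularity.

Section Grid.
Context {R : realType}.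
Variable theta : R.
Hypothesis theta_gt0 : 0 < theta.

Lemma zgrid_bracket x : exists n0 : int, zgrid theta n0 < x <= zgrid theta (n0 + 1).
Proof.
exists (Num.ceil (x / theta) - 1); rewrite /zgrid subrK.
rewrite -ltr_pdivlMr // -ler_pdivrMr //.
by rewrite ceilB1_lt ceil_ge.
Qed.

Lemma exists_grid_cost_jump (f : R -> R) x k : coercive f ->
  exists m n0 : int, [/\ x <= zgrid theta m,
    zgrid theta n0 < x <= zgrid theta (n0 + 1) &
    f (zgrid theta n0) + k < f (zgrid theta m)].
Proof.
move=> co; have [n0 hn0] := zgrid_bracket x.
have [N HN] := co (f (zgrid theta n0) + k + 1).
have [m /andP[_]] := zgrid_bracket (Num.max N x); rewrite ge_max => /andP[Nz xz].
exists (m + 1), n0; split => //.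
by have := HN _ (le_trans Nz (ler_norm _)); lra.
Qed.

End Grid.

Section Model.
Context {R : realType} {d : measure_display} {Omega : measurableType d}.
Variables (P : probability Omega R) (T : nat) (alpha : R) (c K : nat -> R)
  (G : nat -> R -> R) (D : nat -> {RV P >-> R}).

Local Notation Hs := (Hstar T alpha c K G D).
Local Notation Vs := (Vstar T alpha c K G D).

Lemma Vstar_succ t : (t.+1 < T)%N -> Vs t.+1 = setup_value (Hs t.+1) (K t.+1).
Proof.
move=> tT; apply: funext => x; rewrite /Vstar.
have -> : (T - t.+1 = (T - t.+2).+1)%N by lia.
by rewrite /= (_ : (T - (T - t.+2).+1 = t.+1)%N) //; lia.
Qed.

Lemma Vstar_T : Vs T = fun=> 0.
Proof. by rewrite /Vstar subnn. Qed.

Hypotheses (alpha_ge0 : 0 <= alpha) (K_ge0 : forall t, (t < T)%N -> 0 <= K t)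
  (K_decr : forall t, (t.+1 < T)%N -> alpha * K t.+1 <= K t)
  (D_ge0 : forall t, (t < T)%N -> forall w, 0 <= D t w)
  (Vs_int : forall t, (t < T)%N -> forall y : R,
     P.-integrable setT (fun w => (Vs t.+1 (y - D t w))%:E))
  (C_convex : forall t, (t < T)%N ->
     convex_fun (Cfun alpha c G D t) /\ coercive (Cfun alpha c G D t)).

Lemma Hstar_regular t : (t < T)%N ->
  (exists2 k, alpha * k <= K t & value_regular k (Vs t.+1)) -> cost_regular (Hs t).
Proof.
move=> tT [k _ Vreg]; have [C_cvx C_co] := C_convex tT.
exact: cost_regular_step C_cvx C_co alpha_ge0 (D_ge0 tT) (Vs_int tT) Vreg.
Qed.

Lemma Vstar_next_regular t : (t < T)%N ->
  exists2 k, alpha * k <= K t & value_regular k (Vs t.+1).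
Proof.
move=> tT; have [n] : exists n, T = (t + n).+1 by exists (T - t.+1)%N; lia.
elim: n t tT => [|n IH] t tT Tn.
  exists 0; first by rewrite mulr0 K_ge0.
  have -> : t.+1 = T by lia.
  rewrite Vstar_T; split; [by exists 0 | by move=> *; rewrite addr0 |].
  by move=> b e e0; exists 1 => // *; rewrite subrr normr0.
have t1T : (t.+1 < T)%N by lia.
exists (K t.+1); first exact: K_decr.
rewrite Vstar_succ //; apply: setup_value_regular; first exact: K_ge0.
by apply: Hstar_regular => //; apply: IH; lia.
Qed.

End Model.

Theorem lemma4p7 (R : realType) (d : measure_display) (Omega : measurableType d)
  (P : probability Omega R) (T : nat) (alpha : R) (c K : nat -> R)
  (G : nat -> R -> R) (D : nat -> {RV P >-> R}) (theta : R) :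
  (2 <= T)%N ->
  0 < alpha <= 1 ->
  (forall t, (t < T)%N -> 0 <= K t) ->
  (forall t, (t.+1 < T)%N -> alpha * K t.+1 <= K t) ->
  demands_independent T D ->
  (forall t, (t < T)%N -> forall w, 0 <= D t w) ->
  (forall t, (t < T)%N -> P.-integrable setT (EFin \o D t)) ->
  (forall t, (t < T)%N -> forall y : R,
     P.-integrable setT
       (fun w => (Vstar T alpha c K G D t.+1 (y - D t w))%:E)) ->
  (forall t, (t < T)%N ->
     convex_fun (Cfun alpha c G D t) /\ coercive (Cfun alpha c G D t)) ->
  0 < theta ->
  forall t, (t < T)%N ->
    Sstar T alpha c K G D t <= SU alpha c K G D theta t.
Proof.
move=> _ /andP[alpha_gt0 _] K_ge0 K_decr _ D_ge0 _ Vs_int C_convex theta_gt0 t tT.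
have alpha_ge0 := ltW alpha_gt0.
have [k k_le Vreg] := Vstar_next_regular alpha_ge0 K_ge0 K_decr D_ge0 Vs_int C_convex tT.
have Hreg := Hstar_regular alpha_ge0 D_ge0 Vs_int C_convex tT (ex_intro2 _ _ k k_le Vreg).
have [s smin] := cost_regular_has_min Hreg.
have [C_cvx C_co] := C_convex t tT.
have inf_H : inf (range (Hstar T alpha c K G D t)) = Hstar T alpha c K G D t s.
  by apply: inf_minimum; [move=> _ [y _ <-]; exact: smin | exists s].
have [L L_lb] := coercive_sublevel_lbound (Hstar T alpha c K G D t s) Hreg.1.
have Sstar_le_s : Sstar T alpha c K G D t <= s.
  rewrite /Sstar inf_H; apply: (ge_inf _) => //; exists L => x /= Hx.
  by apply: L_lb; rewrite /= Hx.
apply: le_trans Sstar_le_s (lb_le_inf _ _).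
  have [m [n0 [hm hn0 jump]]] := exists_grid_cost_jump theta_gt0 (Cm alpha c G D t) (K t) C_co.
  by exists (zgrid theta m), m => //; split => //; exists n0.
move=> _ [m /= [Cm_le [n0 [/andP[z0_lt _] jump]]] <-].
have [_ Vs_le _] := Vreg.
apply: minimizer_le_of_cost_jump C_cvx alpha_ge0 k_le _ smin (lt_le_trans z0_lt Cm_le) jump.
by move=> z y; apply: (expected_next_value_le_add (Vs_int t tT) Vs_le).
Qed.
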